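(* Let $L$ and $M$ be finite-dimensional stem Lie superalgebras over a field of characteristic different from $2,3$. Then $L\sim M$ if and only if $L\cong M$.
   Context: Lie superalgebras: $\mathbb{Z}_2$-graded algebras $L=L_{\bar0}\oplus L_{\bar1}$ with graded skew-symmetric bracket satisfying the graded Jacobi identity; homomorphisms are even bracket-preserving linear maps. $Z(L)$ is the center, $L'=[L,L]$. $L$ is stem if $Z(L)\subseteq L'$. $L\sim M$ (isoclinic) means there are isomorphisms $\varphi:L/Z(L)\to M/Z(M)$ and $\theta:L'\to M'$ with $\theta([l,m])=[k,r]$ whenever $k+Z(M)=\varphi(l+Z(L))$ and $r+Z(M)=\varphi(m+Z(L))$. *)

From HB Require Import structures.
From mathcomp Require Import all_boot all_order all_algebra.
Set Implicit Arguments. Unset Strict Implicit. Unset Printing Implicit Defensive.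
Import GRing.Theory.
Local Open Scope ring_scope.

Section LieSuper.
Variable F : fieldType.

(* Z_2 is represented by bool: false = 0-bar (even), true = 1-bar (odd). *)
Record is_lie_superalgebra (V : vectType F) (part : bool -> {vspace V})
    (br : V -> V -> V) : Prop := {
  lsa_direct : directv (part false + part true);
  lsa_full : (part false + part true)%VS = fullv;
  lsa_linl : forall (a : F) (x y z : V), br (a *: x + y) z = a *: br x z + br y z;
  lsa_linr : forall (a : F) (x y z : V), br x (a *: y + z) = a *: br x y + br x z;
  lsa_graded : forall (i j : bool) (x y : V),
      x \in part i -> y \in part j -> br x y \in part (i (+) j);
  lsa_skew : forall (i j : bool) (x y : V),
      x \in part i -> y \in part j ->
      br x y = - (((-1) ^+ (i && j) : F) *: br y x);
  lsa_jacobi : forall (i j k : bool) (x y z : V),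
      x \in part i -> y \in part j -> z \in part k ->
      ((-1) ^+ (i && k) : F) *: br x (br y z)
    + ((-1) ^+ (j && i) : F) *: br y (br z x)
    + ((-1) ^+ (k && j) : F) *: br z (br x y) = 0
}.

Record lsa := LSA {
  lsa_sort :> vectType F;
  lsa_part : bool -> {vspace lsa_sort};
  lsa_br : lsa_sort -> lsa_sort -> lsa_sort;
  lsa_ax : is_lie_superalgebra lsa_part lsa_br
}.

Definition lsa_center (L : lsa) (z : L) : Prop := forall x : L, lsa_br z x = 0.

Definition lsa_derived (L : lsa) (x : L) : Prop :=
  exists s : seq (L * L), x = \sum_(q <- s) lsa_br q.1 q.2.

Definition lsa_stem (L : lsa) : Prop :=
  forall z : L, lsa_center z -> lsa_derived z.

Definition lsa_hom (L M : lsa) (f : L -> M) : Prop :=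
  [/\ forall (a : F) (x y : L), f (a *: x + y) = a *: f x + f y,
      forall (b : bool) (x : L), x \in lsa_part L b -> f x \in lsa_part M b
    & forall x y : L, f (lsa_br x y) = lsa_br (f x) (f y)].

Definition lsa_isomorphic (L M : lsa) : Prop :=
  exists f : L -> M, lsa_hom f /\ bijective f.

(* The isomorphism phi : L/Z(L) -> M/Z(M) is represented by a
   function phi0 : L -> M on representatives: phi (l + Z(L)) = phi0 l + Z(M).
   The isomorphism theta : L' -> M' is represented by a function on L whose
   behaviour is only relevant on L'. *)
Record isoclinic_via (L M : lsa) (phi theta : L -> M) : Prop := {
  phi_wd : forall x : L, lsa_center x -> lsa_center (phi x);
  phi_lin : forall (a : F) (x y : L),
      lsa_center (phi (a *: x + y) - (a *: phi x + phi y));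
  phi_even : forall (b : bool) (x : L), x \in lsa_part L b ->
      exists2 y : M, y \in lsa_part M b & lsa_center (phi x - y);
  phi_br : forall x y : L,
      lsa_center (phi (lsa_br x y) - lsa_br (phi x) (phi y));
  phi_inj : forall x : L, lsa_center (phi x) -> lsa_center x;
  phi_surj : forall y : M, exists x : L, lsa_center (y - phi x);
  theta_into : forall x : L, lsa_derived x -> lsa_derived (theta x);
  theta_lin : forall (a : F) (x y : L), lsa_derived x -> lsa_derived y ->
      theta (a *: x + y) = a *: theta x + theta y;
  theta_even : forall (b : bool) (x : L), lsa_derived x ->
      x \in lsa_part L b -> theta x \in lsa_part M b;
  theta_br : forall x y : L, lsa_derived x -> lsa_derived y ->
      theta (lsa_br x y) = lsa_br (theta x) (theta y);
  theta_inj : forall x y : L, lsa_derived x -> lsa_derived y ->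
      theta x = theta y -> x = y;
  theta_surj : forall y : M, lsa_derived y ->
      exists2 x : L, lsa_derived x & theta x = y;
  compat : forall (l m : L) (k r : M),
      lsa_center (k - phi l) -> lsa_center (r - phi m) ->
      theta (lsa_br l m) = lsa_br k r
}.

Definition lsa_isoclinic (L M : lsa) : Prop :=
  exists (phi theta : L -> M), isoclinic_via phi theta.

End LieSuper.

(* Given an isoclinism (phi, theta), take a homogeneous basis of L made of
   bases of graded complements of L' in L_0 and L_1 followed by bases of
   L'_0 and L'_1.  Sending the basis vectors of L' to their theta-images and
   the others to even representatives of their phi-classes defines an even
   linear map f that agrees with theta on L' and with phi modulo Z(M); by
   compatibility f [x, y] = theta [x, y] = [f x, f y].  Stemness makes f
   bijective: f x = 0 puts x in Z(L), hence in L', where theta x = 0 forces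
   x = 0; and M = f L + Z(M) with Z(M) inside M' = theta L' = f L'. *)
From mathcomp Require Import all_boot all_order all_algebra.
From Stdlib Require Import IndefiniteDescription.
Set Implicit Arguments. Unset Strict Implicit. Unset Printing Implicit Defensive.
Import GRing.Theory.
Local Open Scope ring_scope.

Section LinearFun.
Variables (F : fieldType) (V W : lmodType F) (f : V -> W).
Hypothesis f_lin : forall a x y, f (a *: x + y) = a *: f x + f y.

Lemma lin0 : f 0 = 0.
Proof.
have := f_lin 1 0 0; rewrite !scale1r addr0 => h.
by apply: (addrI (f 0)); rewrite addr0 -{1}h.
Qed.

Lemma linD x y : f (x + y) = f x + f y.
Proof. by have := f_lin 1 x y; rewrite !scale1r. Qed.

Lemma linZ a x : f (a *: x) = a *: f x.
Proof. by have := f_lin a x 0; rewrite !addr0 lin0 addr0. Qed.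

Lemma linB x y : f (x - y) = f x - f y.
Proof. by rewrite linD -scaleN1r linZ scaleN1r. Qed.

Lemma lin_sum I (r : seq I) (G : I -> V) :
  f (\sum_(i <- r) G i) = \sum_(i <- r) f (G i).
Proof. exact: (big_morph f linD lin0). Qed.

End LinearFun.

Lemma inj_surj_bijective (A B : Type) (f : A -> B) :
  injective f -> (forall y, exists x, f x = y) -> bijective f.
Proof.
move=> f_inj f_surj.
pose g y := proj1_sig (constructive_indefinite_description _ (f_surj y)).
have gK : cancel g f :=
  fun y => proj2_sig (constructive_indefinite_description _ (f_surj y)).
by exists g => // x; apply: f_inj; rewrite gK.
Qed.

Section Bracket.
Variables (F : fieldType) (L : lsa F).
Local Notation br := (@lsa_br F L).
Local Notation P := (lsa_part L).
Local Notation cen := (@lsa_center F L).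
Local Notation der := (@lsa_derived F L).
Let ax := lsa_ax L.

Let br_linl z a x y : br (a *: x + y) z = a *: br x z + br y z.
Proof. exact: (lsa_linl ax). Qed.
Let br_linr z a x y : br z (a *: x + y) = a *: br z x + br z y.
Proof. exact: (lsa_linr ax). Qed.

Lemma br0l z : br 0 z = 0. Proof. exact: (lin0 (br_linl z)). Qed.
Lemma brDl x y z : br (x + y) z = br x z + br y z. Proof. exact: (linD (br_linl z)). Qed.
Lemma brZl a x z : br (a *: x) z = a *: br x z. Proof. exact: (linZ (br_linl z)). Qed.
Lemma br_suml I (r : seq I) (G : I -> L) z :
  br (\sum_(i <- r) G i) z = \sum_(i <- r) br (G i) z.
Proof. exact: (lin_sum (br_linl z)). Qed.
Lemma brDr x y z : br z (x + y) = br z x + br z y. Proof. exact: (linD (br_linr z)). Qed.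
Lemma brZr a x z : br z (a *: x) = a *: br z x. Proof. exact: (linZ (br_linr z)). Qed.
Lemma br_sumr I (r : seq I) (G : I -> L) z :
  br z (\sum_(i <- r) G i) = \sum_(i <- r) br z (G i).
Proof. exact: (lin_sum (br_linr z)). Qed.

Lemma parts_cap0 : (P false :&: P true = 0)%VS.
Proof. by apply/directv_addP; exact: (lsa_direct ax). Qed.

Lemma part_decomp x :
  exists2 x0, x0 \in P false & exists2 x1, x1 \in P true & x = x0 + x1.
Proof. by apply/memv_addP; rewrite (lsa_full ax) memvf. Qed.

Lemma part_uniq v b c : v != 0 -> v \in P b -> v \in P c -> b = c.
Proof.
move=> v0 vb vc; apply/eqP/negP => bc.
have : v \in (P false :&: P true)%VS.
  by rewrite memv_cap; case: b c bc vb vc => [] [] // _ -> ->.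
by rewrite parts_cap0 memv0 (negPf v0).
Qed.

Lemma part_add_eq0 b u v : u \in P b -> v \in P (~~ b) -> u + v = 0 -> u = 0.
Proof.
move=> ub vb /eqP; rewrite addr_eq0 => /eqP uv; apply/eqP/negPn/negP => u0.
have ub' : u \in P (~~ b) by rewrite uv memvN.
by have := part_uniq u0 ub ub'; case: b {ub ub' vb uv}.
Qed.

Lemma center0 : cen 0.
Proof. by move=> x; rewrite br0l. Qed.

Lemma centerD x y : cen x -> cen y -> cen (x + y).
Proof. by move=> cx cy z; rewrite brDl cx cy addr0. Qed.

Lemma centerZ a x : cen x -> cen (a *: x).
Proof. by move=> cx z; rewrite brZl cx scaler0. Qed.

Lemma centerN x : cen x -> cen (- x).
Proof. by move=> cx; rewrite -scaleN1r; exact: centerZ. Qed.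

Lemma center_sum I (r : seq I) (G : I -> L) :
  (forall i, cen (G i)) -> cen (\sum_(i <- r) G i).
Proof.
by move=> cG; elim/big_rec: _ => [|i x _ cx]; [exact: center0 | exact: centerD].
Qed.

Lemma center_sub_sym x y : cen (x - y) -> cen (y - x).
Proof. by move=> cxy; rewrite -opprB; exact: centerN. Qed.

Lemma center_sub_trans y x z : cen (x - y) -> cen (y - z) -> cen (x - z).
Proof. by move=> cxy cyz; have := centerD cxy cyz; rewrite addrA subrK. Qed.

Lemma center_part_br c c0 c1 b y : cen c -> c0 \in P false -> c1 \in P true ->
  c = c0 + c1 -> y \in P b -> br c0 y = 0 /\ br c1 y = 0.
Proof.
move=> cc c0P c1P ec yP; have := cc y; rewrite ec brDl => c01.
have c0y : br c0 y \in P b by exact: (lsa_graded ax c0P yP).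
have c1y : br c1 y \in P (~~ b) by exact: (lsa_graded ax c1P yP).
have c0y0 := part_add_eq0 c0y c1y c01.
by move: c01; rewrite c0y0 add0r.
Qed.

Lemma br_center x c : cen c -> br x c = 0.
Proof.
move=> cc; have [c0 c0P [c1 c1P ec]] := part_decomp c.
have [x0 x0P [x1 x1P ->]] := part_decomp x.
have [c0x0 c1x0] := center_part_br cc c0P c1P ec x0P.
have [c0x1 c1x1] := center_part_br cc c0P c1P ec x1P.
rewrite ec !brDl !brDr (lsa_skew ax x0P c0P) (lsa_skew ax x0P c1P).
rewrite (lsa_skew ax x1P c0P) (lsa_skew ax x1P c1P) c0x0 c1x0 c0x1 c1x1.
by rewrite !scaler0 !oppr0 !addr0.
Qed.

Definition homogeneous_basis := vbasis (P false) ++ vbasis (P true).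

Lemma homogeneous_basisP : basis_of fullv homogeneous_basis.
Proof.
rewrite -(lsa_full ax); apply: cat_basis.
- exact: (lsa_direct ax).
- exact: vbasisP.
- exact: vbasisP.
Qed.

Lemma homogeneous_basis_part x : x \in homogeneous_basis -> exists b, x \in P b.
Proof.
by rewrite mem_cat => /orP[] /vbasis_mem; [exists false | exists true].
Qed.

(* Spanned by brackets of homogeneous basis vectors, so that it is visibly
   graded. *)
Definition derived_space : {vspace L} :=
  <<[seq br x y | x <- homogeneous_basis, y <- homogeneous_basis]>>%VS.

Definition derived_part b := (P b :&: derived_space)%VS.

Lemma br_derived_space x y : br x y \in derived_space.
Proof.
pose X := in_tuple homogeneous_basis.
have span_X v : v = \sum_i coord X i v *: X`_i.
  by apply: coord_span; rewrite (span_basis homogeneous_basisP) memvf.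
rewrite [x]span_X br_suml; apply: memv_suml => i _; rewrite brZl; apply: memvZ.
rewrite [y]span_X br_sumr; apply: memv_suml => j _; rewrite brZr; apply: memvZ.
by apply/memv_span/allpairs_f; apply: mem_nth.
Qed.

Lemma derived0 : der 0.
Proof. by exists [::]; rewrite big_nil. Qed.

Lemma derived_spaceP x : der x <-> x \in derived_space.
Proof.
split=> [[s ->] | xD]; first by apply: memv_suml => q _; exact: br_derived_space.
rewrite (coord_span (X := in_tuple _) xD).
elim/big_rec: _ => [|i y _ [s ->]]; first exact: derived0.
have /allpairsP[[u v] [_ _ ->]] := mem_nth 0 (ltn_ord i).
exists ((coord (in_tuple _) i x *: u, v) :: s).
by rewrite big_cons brZl.
Qed.

Lemma derived_space_graded :
  (derived_space <= derived_part false + derived_part true)%VS.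
Proof.
apply/span_subvP => g /allpairsP[[x y] [/homogeneous_basis_part[i xi]]].
move=> /homogeneous_basis_part[j yj] {g}->.
have xy_ij := lsa_graded ax xi yj; have xyD := br_derived_space x y.
case: (i (+) j) xy_ij => xyP.
  by apply: (subvP (addvSr _ _)); rewrite memv_cap xyP.
by apply: (subvP (addvSl _ _)); rewrite memv_cap xyP.
Qed.

End Bracket.

Lemma isomorphism_isoclinic (F : fieldType) (L M : lsa F) (f : L -> M) :
  lsa_hom f -> bijective f -> isoclinic_via f f.
Proof.
case=> f_lin f_even f_br [g fK gK]; have f_inj := can_inj fK.
have center_subrr (y : M) : lsa_center (y - y) by rewrite subrr; exact: center0.
split.
- by move=> x cx y; rewrite -(gK y) -f_br cx (lin0 f_lin).
- by move=> a x y; rewrite f_lin; exact: center_subrr.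
- by move=> b x xb; exists (f x); [exact: f_even | exact: center_subrr].
- by move=> x y; rewrite f_br; exact: center_subrr.
- by move=> x cfx y; apply: f_inj; rewrite f_br cfx (lin0 f_lin).
- by move=> y; exists (g y); rewrite gK; exact: center_subrr.
- move=> _ [s ->]; exists [seq (f q.1, f q.2) | q <- s].
  by rewrite big_map (lin_sum f_lin); apply: eq_bigr => q _; rewrite f_br.
- by move=> a x y _ _; rewrite f_lin.
- by move=> b x _; exact: f_even.
- by move=> x y _ _; rewrite f_br.
- by move=> x y _ _; exact: f_inj.
- move=> _ [s ->]; exists (\sum_(q <- s) lsa_br (g q.1) (g q.2)).
    by exists [seq (g q.1, g q.2) | q <- s]; rewrite big_map.
  by rewrite (lin_sum f_lin); apply: eq_bigr => q _; rewrite f_br !gK.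
- move=> l m k r ck cr.
  rewrite -[k](subrK (f l)) -[r](subrK (f m)) brDl ck add0r brDr.
  by rewrite (br_center _ cr) add0r f_br.
Qed.

Section Isoclinism.
Variables (F : fieldType) (L M : lsa F) (phi theta : L -> M).
Hypothesis iso : isoclinic_via phi theta.
Local Notation cenM := (@lsa_center F M).
Local Notation PL := (lsa_part L).
Local Notation PM := (lsa_part M).
Local Notation DL := (derived_space L).

Lemma theta0 : theta 0 = 0.
Proof.
have := theta_lin iso 1 (derived0 L) (derived0 L); rewrite !scale1r addr0 => h.
by apply: (addrI (theta 0)); rewrite addr0 -{1}h.
Qed.

Lemma thetaD x y : x \in DL -> y \in DL -> theta (x + y) = theta x + theta y.
Proof.
move=> /derived_spaceP xD /derived_spaceP yD.
by have := theta_lin iso 1 xD yD; rewrite !scale1r.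
Qed.

Lemma thetaZ a x : x \in DL -> theta (a *: x) = a *: theta x.
Proof.
move=> /derived_spaceP xD.
by have := theta_lin iso a xD (derived0 L); rewrite !addr0 theta0 addr0.
Qed.

Lemma theta_sum I (r : seq I) (G : I -> L) : (forall i, G i \in DL) ->
  theta (\sum_(i <- r) G i) = \sum_(i <- r) theta (G i).
Proof.
move=> GD; elim: r => [|i r IH]; first by rewrite !big_nil theta0.
by rewrite !big_cons thetaD ?IH // memv_suml.
Qed.

Lemma phi0_center : cenM (phi 0).
Proof.
have := phi_lin iso 1 0 0; rewrite !scale1r addr0 opprD addrA subrr add0r.
by move/centerN; rewrite opprK.
Qed.

Lemma phiZ_center a x : cenM (phi (a *: x) - a *: phi x).
Proof.
have := centerD (phi_lin iso a x 0) phi0_center.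
by rewrite !addr0 opprD addrA subrK.
Qed.

Lemma phi_sum_center I (r : seq I) (G : I -> L) :
  cenM (phi (\sum_(i <- r) G i) - \sum_(i <- r) phi (G i)).
Proof.
elim: r => [|i r IH]; first by rewrite !big_nil subr0; exact: phi0_center.
have := phi_lin iso 1 (G i) (\sum_(j <- r) G j); rewrite !scale1r !big_cons.
by move/center_sub_trans; apply; rewrite opprD addrACA subrr add0r.
Qed.

(* Compatibility gives theta [l, m] = [phi l, phi m] = phi [l, m] modulo Z(M). *)
Lemma theta_phi_center x : x \in DL -> cenM (theta x - phi x).
Proof.
move=> /derived_spaceP[s ->].
rewrite theta_sum; last by move=> q; exact: br_derived_space.
apply: (@center_sub_trans _ _ (\sum_(q <- s) phi (lsa_br q.1 q.2))); last first.
  by apply: center_sub_sym; exact: phi_sum_center.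
rewrite -sumrB; apply: center_sum => q.
rewrite (compat iso (k := phi q.1) (r := phi q.2));
  try by rewrite subrr; exact: center0.
by apply: center_sub_sym; exact: (phi_br iso).
Qed.

Lemma even_lift_exists v : exists y : M,
  forall b, v \in PL b -> y \in PM b /\ cenM (phi v - y).
Proof.
have [-> | v0] := eqVneq v 0.
  by exists 0 => b _; rewrite mem0v subr0; split=> //; exact: phi0_center.
have [[b vb] | v_inhom] : (exists b, v \in PL b) \/ forall b, v \notin PL b.
- case vt: (v \in PL true); first by left; exists true.
  case vf: (v \in PL false); first by left; exists false.
  by right=> -[]; rewrite ?vt ?vf.
- have [y yb cy] := phi_even iso vb.
  by exists y => c vc; rewrite -(part_uniq v0 vb vc).
- by exists 0 => b vb; have := v_inhom b; rewrite vb.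
Qed.

Definition even_lift v :=
  proj1_sig (constructive_indefinite_description _ (even_lift_exists v)).

Lemma even_liftP v b :
  v \in PL b -> even_lift v \in PM b /\ cenM (phi v - even_lift v).
Proof.
exact: (proj2_sig (constructive_indefinite_description _ (even_lift_exists v))).
Qed.

Definition compl_part b := (PL b :\: DL)%VS.

Definition adapted_basis :=
  (vbasis (compl_part false) ++ vbasis (derived_part L false))
  ++ (vbasis (compl_part true) ++ vbasis (derived_part L true)).

Lemma adapted_part_basis b :
  basis_of (PL b) (vbasis (compl_part b) ++ vbasis (derived_part L b)).
Proof.
rewrite basisEdim span_cat !(span_basis (vbasisP _)) addv_diff_cap subvv /=.
by rewrite size_cat !size_tuple addnC dimv_cap_compl.
Qed.

Lemma adapted_basisP : basis_of fullv adapted_basis.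
Proof.
rewrite -(lsa_full (lsa_ax L)); apply: cat_basis.
- exact: (lsa_direct (lsa_ax L)).
- exact: adapted_part_basis.
- exact: adapted_part_basis.
Qed.

Lemma adapted_basis_part v : v \in adapted_basis -> exists b, v \in PL b.
Proof.
rewrite mem_cat => /orP[] vE; [exists false | exists true];
  exact: basis_mem (adapted_part_basis _) vE.
Qed.

Definition basis_image v := if v \in DL then theta v else even_lift v.

Lemma basis_image_part v b : v \in PL b -> basis_image v \in PM b.
Proof.
rewrite /basis_image; case: ifP => [/derived_spaceP vD | _] vb.
  exact: (theta_even iso vD).
by have [] := even_liftP vb.
Qed.

Lemma basis_image_center v : v \in adapted_basis -> cenM (phi v - basis_image v).
Proof.
move=> /adapted_basis_part[b vb]; rewrite /basis_image; case: ifP => vD.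
  by apply: center_sub_sym; exact: theta_phi_center.
by have [] := even_liftP vb.
Qed.

Let E := in_tuple adapted_basis.

Definition isoclinism_map x := \sum_i coord E i x *: basis_image E`_i.
Local Notation f := isoclinism_map.

Lemma isoclinism_map_lin a x y : f (a *: x + y) = a *: f x + f y.
Proof.
rewrite /f scaler_sumr -big_split; apply: eq_bigr => i _.
by rewrite linearP /= scalerDl scalerA.
Qed.

Lemma isoclinism_map_basis v : v \in adapted_basis -> f v = basis_image v.
Proof.
move=> vE; have E_free : free E := basis_free adapted_basisP.
have v_idx : (index v adapted_basis < size adapted_basis)%N by rewrite index_mem.
pose i := Ordinal v_idx.
have vi : v = E`_i by rewrite /= nth_index.
rewrite /f {1}vi; under eq_bigr => j _ do rewrite coord_free //.
rewrite (bigD1 i) //= eqxx scale1r big1 ?addr0 -?vi // => j /negPf ji.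
by rewrite eq_sym ji scale0r.
Qed.

Lemma isoclinism_map_span U : {subset vbasis U <= adapted_basis} ->
  forall x, x \in U ->
  f x = \sum_i coord (vbasis U) i x *: basis_image (vbasis U)`_i.
Proof.
move=> UE x xU; rewrite {1}(coord_vbasis xU) (lin_sum isoclinism_map_lin).
apply: eq_bigr => i _; rewrite (linZ isoclinism_map_lin) isoclinism_map_basis //.
by apply/UE/mem_nth; rewrite size_tuple.
Qed.

Lemma compl_part_adapted b : {subset vbasis (compl_part b) <= adapted_basis}.
Proof. by case: b => v vT; rewrite !mem_cat vT ?orbT. Qed.

Lemma derived_part_adapted b : {subset vbasis (derived_part L b) <= adapted_basis}.
Proof. by case: b => v vD; rewrite !mem_cat vD ?orbT. Qed.

Lemma isoclinism_map_derived_part b x : x \in derived_part L b -> f x = theta x.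
Proof.
move=> xD; rewrite (isoclinism_map_span (@derived_part_adapted b) xD).
rewrite {2}(coord_vbasis xD) theta_sum => [|i]; last first.
  by apply/memvZ/(subvP (capvSr _ _))/vbasis_mem/mem_nth; rewrite size_tuple.
apply: eq_bigr => i _; rewrite /basis_image.
have eiD : (vbasis (derived_part L b))`_i \in DL.
  by apply/(subvP (capvSr _ _))/vbasis_mem/mem_nth; rewrite size_tuple.
by rewrite eiD thetaZ.
Qed.

Lemma isoclinism_map_derived x : x \in DL -> f x = theta x.
Proof.
move=> /(subvP (derived_space_graded L)) /memv_addP[u uD [v vD ->]].
rewrite (linD isoclinism_map_lin) (isoclinism_map_derived_part uD).
rewrite (isoclinism_map_derived_part vD) thetaD //.
  exact: (subvP (capvSr _ _)) uD.
exact: (subvP (capvSr _ _)) vD.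
Qed.

Lemma isoclinism_map_part b x : x \in PL b -> f x \in PM b.
Proof.
rewrite -[PL b](addv_diff_cap _ DL) => /memv_addP[t tT [d dD ->]].
rewrite (linD isoclinism_map_lin); apply: memvD.
  rewrite (isoclinism_map_span (@compl_part_adapted b) tT).
  apply: memv_suml => i _; apply/memvZ/basis_image_part.
  by apply/(subvP (diffvSl _ _))/vbasis_mem/mem_nth; rewrite size_tuple.
rewrite (isoclinism_map_derived_part dD).
move: dD; rewrite memv_cap => /andP[db /derived_spaceP dD].
exact: (theta_even iso dD db).
Qed.

Lemma isoclinism_map_center x : cenM (f x - phi x).
Proof.
rewrite {2}(coord_span (X := E) (_ : x \in span E)); last first.
  by rewrite (span_basis adapted_basisP) memvf.
apply: (@center_sub_trans _ _ (\sum_i coord E i x *: phi E`_i)).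
  rewrite -sumrB; apply: center_sum => i; rewrite -scalerBr; apply: centerZ.
  by apply/center_sub_sym/basis_image_center/mem_nth.
apply: (@center_sub_trans _ _ (\sum_i phi (coord E i x *: E`_i))).
  rewrite -sumrB; apply: center_sum => i.
  by apply: center_sub_sym; exact: phiZ_center.
by apply: center_sub_sym; exact: phi_sum_center.
Qed.

Lemma isoclinism_map_br x y : f (lsa_br x y) = lsa_br (f x) (f y).
Proof.
rewrite isoclinism_map_derived ?br_derived_space //.
by apply: (compat iso); exact: isoclinism_map_center.
Qed.

Lemma isoclinism_map_inj : lsa_stem L -> injective f.
Proof.
move=> stemL; suff f_eq0 x : f x = 0 -> x = 0.
  move=> x y fxy; apply/eqP; rewrite -subr_eq0; apply/eqP/f_eq0.
  by rewrite (linB isoclinism_map_lin) fxy subrr.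
move=> fx0; have xD : lsa_derived x.
  apply/stemL/(phi_inj iso).
  by have := centerN (isoclinism_map_center x); rewrite fx0 sub0r opprK.
apply: (theta_inj iso xD (derived0 L)).
by rewrite theta0 -isoclinism_map_derived //; apply/derived_spaceP.
Qed.

Lemma isoclinism_map_surj : lsa_stem M -> forall y, exists x, f x = y.
Proof.
move=> stemM y; have [x cyx] := phi_surj iso y.
have /stemM /(theta_surj iso)[d /derived_spaceP dD thd] : cenM (y - f x).
  by apply/(center_sub_trans cyx)/center_sub_sym/isoclinism_map_center.
exists (x + d).
by rewrite (linD isoclinism_map_lin) (isoclinism_map_derived dD) thd addrC subrK.
Qed.

Lemma stem_isoclinic_isomorphic : lsa_stem L -> lsa_stem M -> lsa_isomorphic L M.
Proof.
move=> stemL stemM; exists f; split.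
  split; [exact: isoclinism_map_lin | exact: isoclinism_map_part |].
  exact: isoclinism_map_br.
exact: inj_surj_bijective (isoclinism_map_inj stemL) (isoclinism_map_surj stemM).
Qed.

End Isoclinism.

Theorem theorem3p6 (F : fieldType) (L M : lsa F)
  (hchar2 : (2 \notin [pchar F])%N) (hchar3 : (3 \notin [pchar F])%N)
  (hL : lsa_stem L) (hM : lsa_stem M) :
  lsa_isoclinic L M <-> lsa_isomorphic L M.
Proof.
split=> [[phi [theta iso]] | [f [f_hom f_bij]]].
  exact: stem_isoclinic_isomorphic iso hL hM.
by exists f, f; exact: isomorphism_isoclinic.
Qed.
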